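(* For every density operator $\rho$ on $\mathbb{C}^d$, $$\frac1d\le C_{\mathcal{F}}(\rho)\le\lambda_{\max}\le 1,$$ where $\lambda_{\max}$ is the largest eigenvalue of $\rho$. Moreover $C_{\mathcal{F}}(\rho)=1$ if and only if $\rho$ is (the projector onto) a maximally coherent state, and if $\rho$ is incoherent then $C_{\mathcal{F}}(\rho)=1/d$.
   Context: Fix the computational basis $\{|i\rangle\}_{i=0}^{d-1}$ of $\mathbb{C}^d$ as the incoherent basis; a state is incoherent if it is diagonal in this basis. A maximally coherent state is a pure state of the form $\frac1{\sqrt d}\sum_{i}e^{\mathrm{i}\theta_i}|i\rangle$ with real $\theta_i$. The quantum coherence fraction is $C_{\mathcal{F}}(\rho)=\max_{|\phi\rangle\text{ maximally coherent}}\langle\phi|\rho|\phi\rangle$. *)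

From HB Require Import structures.
From mathcomp Require Import all_boot all_order all_algebra.
From mathcomp Require Import spectral.
From mathcomp Require Import complex.
From mathcomp Require Import classical_sets reals trigo.
Set Implicit Arguments. Unset Strict Implicit. Unset Printing Implicit Defensive.
Import Order.TTheory GRing.Theory Num.Theory.
Local Open Scope ring_scope.
Local Open Scope complex_scope.
Local Open Scope classical_set_scope.
Local Open Scope sesquilinear_scope.

(* Kets are column vectors 'cV[R[i]]_d, operators are 'M[R[i]]_d, in the
   computational (incoherent) basis; M ^t* is the conjugate transpose. *)

Definition density_op (R : realType) (d : nat) (rho : 'M[R[i]]_d) : Prop :=
  rho ^t* = rho /\
  (forall v : 'cV[R[i]]_d, 0 <= (v ^t* *m rho *m v) 0 0) /\
  \tr rho = 1.

Definition max_coherent (R : realType) (d : nat) (phi : 'cV[R[i]]_d) : Prop :=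
  exists theta : 'I_d -> R, forall i : 'I_d,
    phi i 0 = (cos (theta i) +i* sin (theta i)) / (Num.sqrt (d%:R : R))%:C.

(* <phi| rho |phi>  (real part; it is real for Hermitian rho) *)
Definition fidelity (R : realType) (d : nat) (rho : 'M[R[i]]_d)
  (phi : 'cV[R[i]]_d) : R := complex.Re ((phi ^t* *m rho *m phi) 0 0).

Definition coh_fraction (R : realType) (d : nat) (rho : 'M[R[i]]_d) : R :=
  sup [set fidelity rho phi | phi in @max_coherent R d].

Definition largest_eigenvalue (R : realType) (d : nat) (rho : 'M[R[i]]_d)
  (l : R) : Prop :=
  eigenvalue rho l%:C /\ (forall a : R[i], eigenvalue rho a -> complex.Re a <= l).

Definition incoherent (R : realType) (d : nat) (rho : 'M[R[i]]_d) : Prop :=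
  is_diag_mx rho.

From HB Require Import structures.
From mathcomp Require Import all_boot all_order all_algebra.
From mathcomp Require Import spectral.
From mathcomp Require Import complex.
From mathcomp Require Import classical_sets reals trigo.
From mathcomp Require Import ring lra.
Set Implicit Arguments. Unset Strict Implicit. Unset Printing Implicit Defensive.
Import Order.TTheory GRing.Theory Num.Theory.
Local Open Scope ring_scope.
Local Open Scope complex_scope.
Local Open Scope sesquilinear_scope.

(* Diagonalize rho = U^* diag(lambda) U with lambda_k >= 0 summing to 1.
   Maximally coherent states are unit vectors, so <phi|rho|phi> is a convex
   combination of the lambda_k and is at most lambda_max <= 1.  For the lower
   bound average <phi_s|rho|phi_s> over the 2^d states with real amplitudes
   s_i / sqrt d, s_i = +-1: the off-diagonal terms cancel and the mean is
   tr rho / d = 1/d.  For diagonal rho every maximally coherent state gives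
   exactly 1/d.  If C_F(rho) = 1 then lambda_max = 1, so rho = |u><u| is pure,
   and |<u|phi>| <= (sum_i |u_i|) / sqrt d for maximally coherent phi; the
   value 1 forces equality in Cauchy-Schwarz, i.e. |u_i| = 1/sqrt d for all
   i, which says that u itself is maximally coherent. *)

Section SquaredModulus.
Variable R : rcfType.
Implicit Types (x y z : R[i]) (a : R).

Definition normc2 z : R := complex.Re z ^+ 2 + complex.Im z ^+ 2.

Lemma normc2E z : (normc2 z)%:C = `|z| ^+ 2.
Proof. exact: add_Re2_Im2. Qed.

Lemma normc2_ge0 z : 0 <= normc2 z.
Proof. by rewrite -ler0c normc2E exprn_ge0. Qed.

Lemma normc2_eq0 z : (normc2 z == 0) = (z == 0).
Proof. by rewrite -(inj_eq (@complexI R)) normc2E sqrf_eq0 normr_eq0. Qed.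

Lemma normc2M x y : normc2 (x * y) = normc2 x * normc2 y.
Proof. by apply: complexI; rewrite rmorphM /= !normc2E normrM exprMn. Qed.

Lemma normc2_real a : normc2 a%:C = a ^+ 2.
Proof. by rewrite /normc2 /= expr0n addr0. Qed.

Lemma normc_sqrt z : `|z| = (Num.sqrt (normc2 z))%:C.
Proof. exact: normc_def. Qed.

Lemma mulcJ_normc2 z : z^*%R * z = (normc2 z)%:C.
Proof. by rewrite normc2E normCK mulrC. Qed.

Lemma conjC_real a : Num.conj a%:C = a%:C.
Proof. exact: conjc_real. Qed.

Lemma Re_mulcl a z : complex.Re (a%:C * z) = a * complex.Re z.
Proof. by case: z => x y /=; rewrite mul0r subr0. Qed.

Lemma Re_mulcr z a : complex.Re (z * a%:C) = complex.Re z * a.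
Proof. by case: z => x y /=; rewrite mulr0 subr0. Qed.

End SquaredModulus.

Section VectorNorm.
Variables (R : rcfType) (n : nat).
Implicit Types (u v : 'cV[R[i]]_n).

Definition normv2 v : R := \sum_i normc2 (v i 0).

Lemma normv2_ge0 v : 0 <= normv2 v.
Proof. by apply: sumr_ge0 => i _; exact: normc2_ge0. Qed.

Lemma dotmx_normv2 v : (v^t* *m v) 0 0 = (normv2 v)%:C.
Proof.
rewrite mxE rmorph_sum; apply: eq_bigr => i _.
by rewrite !mxE mulcJ_normc2.
Qed.

Lemma normv2_eq0 v : (normv2 v == 0) = (v == 0).
Proof.
apply/eqP/eqP => [v0|->]; last first.
  by apply: big1 => i _; rewrite mxE normc2_real expr0n.
apply/colP => i; apply/eqP; rewrite mxE -normc2_eq0; apply/eqP.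
by apply: (psumr_eq0P _ v0) => // j _; exact: normc2_ge0.
Qed.

Lemma normv2_isometry (M : 'M[R[i]]_n) v : M^t* *m M = 1%:M ->
  normv2 (M *m v) = normv2 v.
Proof.
move=> MtM; apply: complexI; rewrite -!dotmx_normv2.
by rewrite trmx_mul map_mxM -mulmxA (mulmxA (M^t*)) MtM mul1mx.
Qed.

End VectorNorm.

Lemma trmxC_delta (R : rcfType) m n (i : 'I_m) (j : 'I_n) :
  (delta_mx i j : 'M[R[i]]_(m, n))^t* = delta_mx j i.
Proof. by apply/matrixP => k l; rewrite !mxE andbC conjC_nat. Qed.

Lemma normc2_delta (R : rcfType) n (k j : 'I_n) :
  normc2 ((delta_mx k 0 : 'cV[R[i]]_n) j 0) = (j == k)%:R.
Proof.
rewrite mxE eqxx andbT /normc2.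
by case: (j == k); rewrite /= ?expr1n expr0n ?addr0.
Qed.

Section HermitianSpectrum.
Variables (R : rcfType) (n : nat) (A : 'M[R[i]]_n).
Hypothesis A_herm : A^t* = A.
Hypothesis A_psd : forall v : 'cV[R[i]]_n, 0 <= (v^t* *m A *m v) 0 0.
Implicit Types v : 'cV[R[i]]_n.

Local Notation U := (spectralmx A).
Local Notation D := (spectral_diag A).

Definition eigval (k : 'I_n) : R := complex.Re (D 0 k).
Definition eigvec (k : 'I_n) : 'cV[R[i]]_n := U^t* *m delta_mx k 0.

Lemma mul_spectralmx_tC : U *m U^t* = 1%:M.
Proof. exact/unitarymxP/spectral_unitarymx. Qed.

Lemma mul_tC_spectralmx : U^t* *m U = 1%:M.
Proof.
have := spectral_unitarymx A; rewrite -trmxC_unitary => /unitarymxP.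
by rewrite trmxCK.
Qed.

Lemma spectral_decomposition : A = U^t* *m diag_mx D *m U.
Proof.
have /orthomx_spectralP : A \is normalmx by apply/normalmxP; rewrite A_herm.
by rewrite invmx_unitary // spectral_unitarymx.
Qed.

Lemma quad_form_spectral v :
  (v^t* *m A *m v) 0 0 = \sum_k D 0 k * (normc2 ((U *m v) k 0))%:C.
Proof.
rewrite {1}spectral_decomposition; set y := U *m v.
have -> : v^t* *m (U^t* *m diag_mx D *m U) *m v = y^t* *m diag_mx D *m y.
  by rewrite /y trmx_mul map_mxM !mulmxA.
rewrite mxE; apply: eq_bigr => k _.
by rewrite mul_mx_diag !mxE mulrAC mulcJ_normc2 mulrC.
Qed.

Lemma spectral_eigvec k : U *m eigvec k = delta_mx k 0.
Proof. by rewrite mulmxA mul_spectralmx_tC mul1mx. Qed.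

Lemma spectral_diag_ge0 k : 0 <= D 0 k.
Proof.
have := A_psd (eigvec k); rewrite quad_form_spectral spectral_eigvec.
rewrite (bigD1 k) //= big1 => [|j /negbTE jk]; last first.
  by rewrite normc2_delta jk mulr0.
by rewrite normc2_delta eqxx mulr1 addr0.
Qed.

Lemma spectral_diagE k : D 0 k = (eigval k)%:C.
Proof.
have /ger0_Im := spectral_diag_ge0 k; rewrite /eigval.
by case: (D 0 k) => a b /= ->.
Qed.

Lemma eigval_ge0 k : 0 <= eigval k.
Proof. by rewrite -ler0c -spectral_diagE spectral_diag_ge0. Qed.

Lemma quad_formE v :
  (v^t* *m A *m v) 0 0 = (\sum_k eigval k * normc2 ((U *m v) k 0))%:C.
Proof.
rewrite quad_form_spectral rmorph_sum; apply: eq_bigr => k _.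
by rewrite spectral_diagE rmorphM.
Qed.

Lemma normv2_spectral v : normv2 (U *m v) = normv2 v.
Proof. exact/normv2_isometry/mul_tC_spectralmx. Qed.

Lemma quad_form_le l v : (forall k, eigval k <= l) ->
  complex.Re ((v^t* *m A *m v) 0 0) <= l * normv2 v.
Proof.
move=> le_l; rewrite quad_formE -normv2_spectral mulr_sumr.
by apply: ler_sum => k _; rewrite ler_wpM2r ?normc2_ge0.
Qed.

Lemma eigenvalue_eigval k : eigenvalue A (eigval k)%:C.
Proof.
apply/eigenvalueP; exists (delta_mx 0 k *m U).
  rewrite [X in _ *m X = _]spectral_decomposition !mulmxA.
  rewrite mulmxtVK ?spectral_unitarymx //.
  rewrite -spectral_diagE scalemxAl; congr (_ *m _).
  apply/rowP => j; rewrite mul_mx_diag !mxE eqxx /=.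
  by case: eqVneq => [->|]; rewrite ?mulr1 ?mul1r ?mulr0 ?mul0r.
rewrite mulmx_free_eq0 ?row_free_unit ?spectral_unit //.
by apply/eqP => /rowP/(_ k); rewrite !mxE !eqxx => /eqP; rewrite oner_eq0.
Qed.

Lemma eigenvalue_le l a : (forall k, eigval k <= l) -> eigenvalue A a ->
  complex.Re a <= l.
Proof.
move=> le_l /eigenvalueP [x xA x_neq0]; set v := x^t*.
have vAv : (v^t* *m A *m v) 0 0 = a * (normv2 v)%:C.
  by rewrite -dotmx_normv2 /v trmxCK xA -!scalemxAl mxE.
have nv_gt0 : 0 < normv2 v.
  by rewrite lt_def normv2_ge0 normv2_eq0 map_mx_eq0 trmx_eq0 x_neq0.
by rewrite -(ler_pM2r nv_gt0) -Re_mulcr -vAv quad_form_le.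
Qed.

Lemma trace_eigval : \tr A = (\sum_k eigval k)%:C.
Proof.
rewrite [in LHS]spectral_decomposition mxtrace_mulC mulmxA.
rewrite mul_spectralmx_tC mul1mx.
by rewrite mxtrace_diag rmorph_sum; apply: eq_bigr => k _; rewrite spectral_diagE.
Qed.

Lemma normv2_eigvec k : normv2 (eigvec k) = 1.
Proof.
rewrite normv2_isometry ?trmxCK ?mul_spectralmx_tC //.
rewrite /normv2 (bigD1 k) //= big1 => [|j /negbTE jk].
  by rewrite normc2_delta eqxx addr0.
by rewrite normc2_delta jk.
Qed.

Lemma rank_one_spectral (k0 : 'I_n) : (forall k, k != k0 -> eigval k = 0) ->
  A = (eigval k0)%:C *: (eigvec k0 *m (eigvec k0)^t*).
Proof.
move=> eigval0; have diagD : diag_mx D = (eigval k0)%:C *: delta_mx k0 k0.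
  apply/matrixP => i j; rewrite !mxE spectral_diagE.
  case: (eqVneq i k0) => [-> | ik0]; first by rewrite eq_sym mulr_natr.
  by rewrite eigval0 // mul0rn mulr0.
rewrite [in LHS]spectral_decomposition diagD /eigvec trmx_mul map_mxM trmxCK.
rewrite trmxC_delta -scalemxAr -scalemxAl !mulmxA.
by rewrite -(mulmxA _ (delta_mx k0 0)) mul_delta_mx.
Qed.

End HermitianSpectrum.

Section RealFacts.
Variable R : realDomainType.

Lemma exists_ge_mean (I : finType) (i0 : I) (F : I -> R) m :
  #|I|%:R * m <= \sum_i F i -> exists i, m <= F i.
Proof.
move=> le_sum; have [i _ Fi_max] := @arg_maxP _ R I i0 xpredT F isT.
have I_gt0 : (0 < #|I|)%N by apply/card_gt0P; exists i0.
exists i; rewrite -(@ler_pM2l _ #|I|%:R) ?ltr0n //.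
apply: le_trans le_sum _; rewrite mulr_natl -sumr_const.
by apply: ler_sum => j _; exact: Fi_max.
Qed.

Lemma eq_const_of_sum_sqr n (a : 'I_n -> R) c :
  \sum_i a i ^+ 2 = 1 -> c ^+ 2 * n%:R = 1 -> 1 <= c * \sum_i a i ->
  forall i, a i = c.
Proof.
move=> sum_a2 cn le_ca.
(* Expanding, the deviation sum equals 2 - 2 c (sum_i a i) <= 0. *)
have dev0 : \sum_i (a i - c) ^+ 2 = 0.
  apply/eqP; rewrite eq_le sumr_ge0 ?andbT => [|i _]; last exact: sqr_ge0.
  under eq_bigr do rewrite sqrrB.
  rewrite !big_split /= sumrN sum_a2 sumr_const card_ord -mulr_natr cn.
  by rewrite sumrMnl -mulr_suml mulrC mulr2n; lra.
move=> i; apply/eqP; rewrite -subr_eq0 -sqrf_eq0; apply/eqP.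
by apply: (psumr_eq0P (fun j _ => sqr_ge0 (a j - c)) dev0).
Qed.

Lemma sum_sign_ffun (I : finType) (i j : I) :
  \sum_(s : {ffun I -> bool}) (-1) ^+ s i * (-1) ^+ s j =
  (i == j)%:R * #|{ffun I -> bool}|%:R :> R.
Proof.
case: eqVneq => [<- | neq_ij].
  by under eq_bigr do rewrite -expr2 sqrr_sign; rewrite sumr_const mul1r.
pose flip (s : {ffun I -> bool}) := [ffun k => (k == i) (+) s k].
have flipK : involutive flip.
  by move=> s; apply/ffunP => k; rewrite !ffunE addbA addbb.
set S := \sum_s _; have S_opp : S = - S.
  rewrite {1}/S (reindex_inj (inv_inj flipK)) -sumrN; apply: eq_bigr => s _.
  by rewrite !ffunE eqxx eq_sym (negbTE neq_ij) signr_addb expr1 mulN1r mulNr.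
by rewrite /= mul0r; lra.
Qed.

End RealFacts.

Section MaxCoherent.
Variables (R : realType) (n : nat).
Implicit Types (phi : 'cV[R[i]]_n) (rho : 'M[R[i]]_n).

Definition arg (z : R[i]) : R :=
  if 0 <= complex.Im z then acos (complex.Re z) else - acos (complex.Re z).

Lemma expi_arg (z : R[i]) : normc2 z = 1 -> cos (arg z) +i* sin (arg z) = z.
Proof.
case: z => x y; rewrite /normc2 /arg /= => xy1.
have x_itv : x \in `[-1, 1] by rewrite in_itv /=; apply/andP; split; nra.
have sin_acos_x : sin (acos x) = `|y|.
  by rewrite sin_acos -?in_itv // -sqrtr_sqr; congr Num.sqrt; lra.
case: lerP => y_sgn; first by rewrite acosK // sin_acos_x ger0_norm.
by rewrite cosN sinN acosK // sin_acos_x ltr0_norm // opprK.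
Qed.

Lemma normc2_expi (t : R) : normc2 (cos t +i* sin t) = 1.
Proof. exact: cos2Dsin2. Qed.

Lemma max_coherentP phi :
  max_coherent phi <-> forall i, normc2 (phi i 0) = n%:R^-1.
Proof.
have normc2_sqrtn : normc2 (Num.sqrt (n%:R : R))%:C = n%:R.
  by rewrite normc2_real sqr_sqrtr.
split => [[theta phiE] i | phi_normc2].
  rewrite phiE normc2M -fmorphV normc2_real normc2_expi mul1r.
  by rewrite exprVn -normc2_real normc2_sqrtn.
exists (fun i => arg (phi i 0 * (Num.sqrt n%:R)%:C)) => i.
have n_neq0 : (n%:R : R) != 0.
  by rewrite pnatr_eq0 -lt0n (leq_ltn_trans _ (ltn_ord i)).
rewrite expi_arg ?normc2M ?phi_normc2 ?normc2_sqrtn ?mulVf // mulfK //.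
by rewrite (inj_eq (@complexI _)) sqrtr_eq0 -ltNge lt0r n_neq0 /=.
Qed.

Lemma normv2_max_coherent phi : (0 < n)%N -> max_coherent phi -> normv2 phi = 1.
Proof.
move=> n_gt0 /max_coherentP phi_normc2; rewrite /normv2.
under eq_bigr do rewrite phi_normc2.
by rewrite sumr_const card_ord -[_ *+ n]mulr_natr mulVf ?pnatr_eq0 -?lt0n.
Qed.

Lemma fidelityE rho phi :
  fidelity rho phi = \sum_i \sum_j complex.Re ((phi i 0)^* * rho i j * phi j 0).
Proof.
rewrite /fidelity mxE; under eq_bigr do rewrite mxE big_distrl.
rewrite exchange_big raddf_sum; apply: eq_bigr => i _.
by rewrite raddf_sum; apply: eq_bigr => j _; rewrite !mxE.
Qed.

Definition sign_state (s : {ffun 'I_n -> bool}) : 'cV[R[i]]_n :=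
  \col_i ((-1) ^+ s i / Num.sqrt n%:R)%:C.

Lemma sign_state_max_coherent s : max_coherent (sign_state s).
Proof.
exists (fun i => if s i then pi else 0) => i.
by rewrite mxE fmorph_div; case: (s i); rewrite ?cospi ?sinpi ?cos0 ?sin0.
Qed.

Lemma fidelity_sign_state rho s : fidelity rho (sign_state s) =
  \sum_i \sum_j (-1) ^+ s i * (-1) ^+ s j * (complex.Re (rho i j) / n%:R).
Proof.
rewrite fidelityE; apply: eq_bigr => i _; apply: eq_bigr => j _.
rewrite !mxE conjC_real Re_mulcr Re_mulcl.
have -> : (n%:R : R)^-1 = (Num.sqrt n%:R)^-1 ^+ 2 by rewrite exprVn sqr_sqrtr.
by ring.
Qed.

Lemma sum_fidelity_sign_state rho :
  \sum_s fidelity rho (sign_state s) =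
  #|{ffun 'I_n -> bool}|%:R * (complex.Re (\tr rho) / n%:R).
Proof.
under eq_bigr do rewrite fidelity_sign_state.
rewrite exchange_big; under eq_bigr do rewrite exchange_big /=.
under eq_bigr do under eq_bigr do rewrite -mulr_suml sum_sign_ffun.
rewrite /mxtrace raddf_sum mulr_suml mulr_sumr; apply: eq_bigr => i _.
rewrite (bigD1 i) //= big1 => [|j /negbTE ji]; last by rewrite eq_sym ji !mul0r.
by rewrite eqxx mul1r addr0 mulrC.
Qed.

Lemma exists_fidelity_ge_trace rho :
  exists2 phi, max_coherent phi & complex.Re (\tr rho) / n%:R <= fidelity rho phi.
Proof.
have [s le_s] :
    exists s, complex.Re (\tr rho) / n%:R <= fidelity rho (sign_state s).
  by apply: (exists_ge_mean [ffun=> false]); rewrite sum_fidelity_sign_state.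
by exists (sign_state s); first exact: sign_state_max_coherent.
Qed.

Lemma fidelity_diag rho phi : is_diag_mx rho -> max_coherent phi ->
  fidelity rho phi = complex.Re (\tr rho) / n%:R.
Proof.
move=> /is_diag_mxP rho_diag /max_coherentP phi_normc2.
rewrite fidelityE /mxtrace raddf_sum mulr_suml; apply: eq_bigr => i _.
rewrite (bigD1 i) //= big1 => [|j ji]; last first.
  by rewrite rho_diag 1?eq_sym // mulr0 mul0r.
by rewrite addr0 mulrAC mulcJ_normc2 Re_mulcl phi_normc2 mulrC.
Qed.

Lemma fidelity_rank_one (u : 'cV[R[i]]_n) phi :
  fidelity (u *m u^t*) phi = normc2 ((u^t* *m phi) 0 0).
Proof.
rewrite /fidelity.
have -> : phi^t* *m (u *m u^t*) *m phi = (u^t* *m phi)^t* *m (u^t* *m phi).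
  by rewrite trmx_mul map_mxM trmxCK !mulmxA.
by rewrite dotmx_normv2 /normv2 big_ord1.
Qed.

Lemma fidelity_rank_one_le (u : 'cV[R[i]]_n) phi : max_coherent phi ->
  fidelity (u *m u^t*) phi <= (\sum_i Num.sqrt (normc2 (u i 0))) ^+ 2 / n%:R.
Proof.
move=> /max_coherentP phi_normc2; rewrite fidelity_rank_one.
set w := (u^t* *m phi) 0 0; set a := fun i => Num.sqrt (normc2 (u i 0)).
have a_ge0 : 0 <= \sum_i a i by apply: sumr_ge0 => i _; exact: sqrtr_ge0.
have w_le : Num.sqrt (normc2 w) <= (\sum_i a i) * Num.sqrt n%:R^-1.
  rewrite -lecR -normc_sqrt mulr_suml rmorph_sum /w mxE.
  apply: le_trans (ler_norm_sum _ _ _) _; apply: ler_sum => i _.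
  by rewrite mxE normrM norm_conjC !mxE !normc_sqrt phi_normc2 rmorphM.
move: w_le; rewrite -(@ler_pXn2r _ 2) ?nnegrE ?mulr_ge0 ?sqrtr_ge0 //.
by rewrite exprMn !sqr_sqrtr ?normc2_ge0 ?invr_ge0.
Qed.

Lemma fidelity_rank_one_self phi : (0 < n)%N -> max_coherent phi ->
  fidelity (phi *m phi^t*) phi = 1.
Proof.
move=> n_gt0 phi_mc; rewrite fidelity_rank_one dotmx_normv2.
by rewrite (normv2_max_coherent n_gt0 phi_mc) normc2_real expr1n.
Qed.

Lemma coh_fraction_le rho b :
  (forall phi, max_coherent phi -> fidelity rho phi <= b) ->
  coh_fraction rho <= b.
Proof.
move=> fid_le; apply: ge_sup => [|_ [phi phi_mc <-]]; last exact: fid_le.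
exists (fidelity rho (sign_state [ffun=> false])).
by exists (sign_state [ffun=> false]); first exact: sign_state_max_coherent.
Qed.

Lemma fidelity_le_coh_fraction rho b phi :
  (forall psi, max_coherent psi -> fidelity rho psi <= b) ->
  max_coherent phi -> fidelity rho phi <= coh_fraction rho.
Proof.
move=> fid_le phi_mc; apply: ub_le_sup; last by exists phi.
by exists b => _ [psi psi_mc <-]; exact: fid_le.
Qed.

Lemma max_coherent_of_coh_fraction_ge1 (u : 'cV[R[i]]_n) :
  normv2 u = 1 -> 1 <= coh_fraction (u *m u^t*) -> max_coherent u.
Proof.
move=> u_unit coh_ge1; apply/max_coherentP => i.
have n_gt0 : (0 < n)%N by rewrite (leq_ltn_trans _ (ltn_ord i)).
set a := fun i => Num.sqrt (normc2 (u i 0)); set c := Num.sqrt (n%:R^-1 : R).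
have c2 : c ^+ 2 = n%:R^-1 by rewrite sqr_sqrtr ?invr_ge0.
have c2n : c ^+ 2 * n%:R = 1 by rewrite c2 mulVf ?pnatr_eq0 -?lt0n.
have sum_a2 : \sum_i a i ^+ 2 = 1.
  by rewrite -u_unit; apply: eq_bigr => j _; rewrite sqr_sqrtr ?normc2_ge0.
have le_ca : 1 <= c * \sum_j a j.
  have : 1 <= (\sum_j a j) ^+ 2 / n%:R.
    apply: le_trans coh_ge1 (coh_fraction_le _) => phi.
    exact: fidelity_rank_one_le.
  rewrite -c2 -exprMn mulrC => le_sqr.
  have a_ge0 : 0 <= \sum_j a j by apply: sumr_ge0 => j _; exact: sqrtr_ge0.
  by rewrite -(@ler_pXn2r _ 2) ?expr1n ?nnegrE ?mulr_ge0 ?sqrtr_ge0.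
by rewrite -c2 -(eq_const_of_sum_sqr sum_a2 c2n le_ca i) sqr_sqrtr ?normc2_ge0.
Qed.

End MaxCoherent.

Section DensityOperator.
Variables (R : realType) (n : nat) (rho : 'M[R[i]]_n).
Hypothesis rho_density : density_op rho.

Let rho_herm : rho^t* = rho := rho_density.1.
Let rho_psd : forall v : 'cV[R[i]]_n, 0 <= (v^t* *m rho *m v) 0 0 :=
  rho_density.2.1.
Let rho_tr1 : \tr rho = 1 := rho_density.2.2.

Local Notation lambda := (eigval rho).

Lemma density_dim_gt0 : (0 < n)%N.
Proof.
rewrite lt0n; apply/eqP => n0; move: rho_tr1; rewrite /mxtrace big1 => [/eqP|i].
  by rewrite eq_sym oner_eq0.
by have := ltn_ord i; rewrite {2}n0.
Qed.

Lemma eigval_sum : \sum_k lambda k = 1.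
Proof. by apply: (@complexI R); rewrite -trace_eigval. Qed.

Lemma eigval_le1 k : lambda k <= 1.
Proof.
rewrite -eigval_sum (bigD1 k) //= lerDl.
by apply: sumr_ge0 => j _; exact: eigval_ge0.
Qed.

Lemma exists_eigval_max : exists k0, forall k, lambda k <= lambda k0.
Proof.
have [k0 _ k0_max] := @arg_maxP _ R _ (Ordinal density_dim_gt0) xpredT lambda isT.
by exists k0 => k; exact: k0_max.
Qed.

Lemma largest_eigenvalue_eigval k0 : (forall k, lambda k <= lambda k0) ->
  largest_eigenvalue rho (lambda k0).
Proof.
move=> k0_max; split; first exact: eigenvalue_eigval.
by move=> a; exact: eigenvalue_le.
Qed.

Lemma fidelity_le_eigval l : (forall k, lambda k <= l) ->
  forall phi, max_coherent phi -> fidelity rho phi <= l.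
Proof.
move=> le_l phi phi_mc; have := normv2_max_coherent density_dim_gt0 phi_mc.
by rewrite /fidelity -[l]mulr1 => <-; exact: quad_form_le.
Qed.

Lemma coh_fraction_ge_inv_dim : n%:R^-1 <= coh_fraction rho.
Proof.
have [phi phi_mc] := exists_fidelity_ge_trace rho.
rewrite rho_tr1 mul1r => le_phi.
apply: le_trans le_phi _.
exact: fidelity_le_coh_fraction (fidelity_le_eigval eigval_le1) phi_mc.
Qed.

Lemma coh_fraction_incoherent : incoherent rho -> coh_fraction rho = n%:R^-1.
Proof.
move=> rho_diag; apply/eqP; rewrite eq_le coh_fraction_ge_inv_dim andbT.
apply: coh_fraction_le => phi phi_mc.
by rewrite fidelity_diag // rho_tr1 mul1r.
Qed.

Lemma eigval_eq0_of_eq1 k0 : lambda k0 = 1 -> forall k, k != k0 -> lambda k = 0.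
Proof.
move=> k0_1; apply: psumr_eq0P => [k _|]; first exact: eigval_ge0.
by have := eigval_sum; rewrite (bigD1 k0) //= k0_1 => sum1; lra.
Qed.

Lemma coh_fraction_eq1P : coh_fraction rho = 1 <->
  exists phi, max_coherent phi /\ rho = phi *m phi^t*.
Proof.
have coh_le1 : coh_fraction rho <= 1.
  exact/coh_fraction_le/fidelity_le_eigval/eigval_le1.
split => [coh1 | [phi [phi_mc rhoE]]]; last first.
  apply/eqP; rewrite eq_le coh_le1.
  rewrite -(fidelity_rank_one_self density_dim_gt0 phi_mc) -rhoE.
  exact: fidelity_le_coh_fraction (fidelity_le_eigval eigval_le1) phi_mc.
have [k0 k0_max] := exists_eigval_max.
have k0_1 : lambda k0 = 1.
  apply/eqP; rewrite eq_le eigval_le1 -coh1.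
  exact/coh_fraction_le/fidelity_le_eigval.
have rhoE : rho = eigvec rho k0 *m (eigvec rho k0)^t*.
  rewrite [LHS](rank_one_spectral rho_herm rho_psd (eigval_eq0_of_eq1 k0_1)).
  by rewrite k0_1 scale1r.
exists (eigvec rho k0); split => //.
by apply: max_coherent_of_coh_fraction_ge1; rewrite ?normv2_eigvec // -rhoE coh1.
Qed.

End DensityOperator.

Theorem mainTheorem4 (R : realType) (d : nat) (rho : 'M[R[i]]_d) :
  density_op rho ->
  (exists lmax : R, largest_eigenvalue rho lmax /\
     (d%:R)^-1 <= coh_fraction rho /\ coh_fraction rho <= lmax /\ lmax <= 1) /\
  (coh_fraction rho = 1 <->
     exists phi : 'cV[R[i]]_d, max_coherent phi /\ rho = phi *m phi ^t*) /\
  (incoherent rho -> coh_fraction rho = (d%:R)^-1).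
Proof.
move=> rho_density; have [k0 k0_max] := exists_eigval_max rho_density.
split; [exists (eigval rho k0); split | split].
- exact: largest_eigenvalue_eigval.
- split; first exact: coh_fraction_ge_inv_dim.
  split; last exact: eigval_le1.
  exact/coh_fraction_le/fidelity_le_eigval.
- exact: coh_fraction_eq1P.
- exact: coh_fraction_incoherent.
Qed.
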